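(* Let $H$ be a connected graph with $n\ge2$ vertices, let $v$ be a vertex of $H$ such that every vertex of $H$ is within distance $d$ of $v$, where $d\ge2$ is an integer, and suppose each vertex of $H$ independently receives a geometrically distributed number of pebbles with parameter $(1+\alpha)^{-1}$, where $\alpha\in\mathbb R_{>0}$. Writing $k:=\lceil n^{1/d}-1\rceil$, the probability that $v$ is unpebblable is at most $$\left(\frac{e\,(2^{d-1}+k-1)}{k\,(1+\Phi(\alpha))}\right)^{k}.$$
   Context: Pebbling: a distribution on a graph assigns a nonnegative integer number of pebbles to each vertex. A pebbling move removes two pebbles from a vertex having at least two pebbles and adds one pebble to an adjacent vertex. A vertex is pebblable if some sequence of pebbling moves from the distribution ends with at least one pebble on it, and unpebblable otherwise. A geometric random variable with parameter $p$ takes value $k\in\{0,1,2,\dots\}$ with probability $p(1-p)^k$. $\Phi:\mathbb R_{\ge0}\to\mathbb R_{\ge0}$ is defined by $\Phi(\alpha):=\alpha^2/(2\alpha+1)$. *)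

From Stdlib Require Import Reals Lra Lia Classical ClassicalEpsilon.
Open Scope R_scope.

Definition simple_graph (n : nat) (adj : nat -> nat -> Prop) : Prop :=
  (forall u w, adj u w -> (u < n)%nat /\ (w < n)%nat) /\
  (forall u w, adj u w -> adj w u) /\
  (forall u, ~ adj u u).

Inductive walk (adj : nat -> nat -> Prop) : nat -> nat -> nat -> Prop :=
| walk_nil : forall u, walk adj u u 0
| walk_cons : forall u x w l, adj u x -> walk adj x w l -> walk adj u w (S l).

Definition connected (n : nat) (adj : nat -> nat -> Prop) : Prop :=
  forall u w, (u < n)%nat -> (w < n)%nat -> exists l, walk adj u w l.

Definition within_dist (n : nat) (adj : nat -> nat -> Prop) (v d : nat) : Prop :=
  forall u, (u < n)%nat -> exists l, (l <= d)%nat /\ walk adj v u l.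

(* Distributions: functions nat -> nat (number of pebbles on each vertex). *)
Definition upd (c : nat -> nat) (x : nat) (k : nat) : nat -> nat :=
  fun y => if Nat.eqb y x then k else c y.

Definition pebbling_move (adj : nat -> nat -> Prop) (c c' : nat -> nat) : Prop :=
  exists u w, adj u w /\ (2 <= c u)%nat /\
    c' = upd (upd c u (c u - 2)) w (upd c u (c u - 2) w + 1).

Inductive reachable (adj : nat -> nat -> Prop) : (nat -> nat) -> (nat -> nat) -> Prop :=
| reach_refl : forall c, reachable adj c c
| reach_step : forall c c' c'', pebbling_move adj c c' -> reachable adj c' c'' ->
    reachable adj c c''.

Definition pebblable (adj : nat -> nat -> Prop) (c : nat -> nat) (v : nat) : Prop :=
  exists c', reachable adj c c' /\ (1 <= c' v)%nat.

Definition unpebblable adj c v : Prop := ~ pebblable adj c v.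

Definition indic (P : Prop) : R :=
  if excluded_middle_informative P then 1 else 0.

(* Sum of f over all distributions on vertices {0,...,m-1} with at most N
   pebbles on each vertex (and 0 pebbles outside {0,...,m-1}). *)
Fixpoint sum_configs (m N : nat) (f : (nat -> nat) -> R) : R :=
  match m with
  | O => f (fun _ => O)
  | S m' => sum_f_R0 (fun j => sum_configs m' N (fun c => f (upd c m' j))) N
  end.

(* Probability weight of a distribution under i.i.d. geometric(p) on n vertices:
   prod_{u<n} p (1-p)^{c u}. *)
Fixpoint geom_weight (p : R) (n : nat) (c : nat -> nat) : R :=
  match n with
  | O => 1
  | S n' => geom_weight p n' c * (p * (1 - p) ^ (c n'))
  end.

(* Probability of the event E restricted to distributions with at most N
   pebbles per vertex.  These are the partial sums (nondecreasing in N) of the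
   series defining P(E); P(E) is their supremum / limit. *)
Definition prob_trunc (n : nat) (p : R) (E : (nat -> nat) -> Prop) (N : nat) : R :=
  sum_configs n N (fun c => geom_weight p n c * indic (E c)).

Definition Phi (a : R) : R := a ^ 2 / (2 * a + 1).

From Stdlib Require Import Reals Lra Lia Classical ClassicalEpsilon.
Open Scope R_scope.

(** If a vertex [w] lies at distance [j] from [v], then [v] is
      pebblable as soon as [2^j] pebbles can be gathered on [w]; and by moving
      pebbles in from its neighbours, [w] can always gather at least the sum of
      [floor(c u / 2)] over its neighbours [u].  Hence if [v] is unpebblable
      this "neighbour half-sum" at [w] is below [2^j].
    - Graph counting.  If every vertex within distance [d-1] of [v] had fewer
      than [k] neighbours, the ball of radius [d] around [v] would contain at
      most [k^d] vertices; so when [k^d < n] there is a hub [w] within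
      distance [d-1] of [v] with at least [k] neighbours.
    - Probability.  A Chernoff (exponential Markov) bound with parameter [z]
      controls the probability that the neighbour half-sum at the hub is at
      most [m = 2^(d-1) - 1]: the generating function of [floor(X/2)] for a
      geometric [X] factorises over the vertices, and the choice
      [z = m / (m + k)] yields the stated bound. *)

Lemma upd_eq (c : nat -> nat) (x k : nat) : upd c x k x = k.
Proof. unfold upd; now rewrite Nat.eqb_refl. Qed.

Lemma upd_neq (c : nat -> nat) (x k y : nat) : y <> x -> upd c x k y = c y.
Proof. intro Hyx; unfold upd; apply Nat.eqb_neq in Hyx; now rewrite Hyx. Qed.

Lemma reachable_trans (adj : nat -> nat -> Prop) (c1 c2 c3 : nat -> nat) :
  reachable adj c1 c2 -> reachable adj c2 c3 -> reachable adj c1 c3.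
Proof. induction 1; intros; auto. eapply reach_step; eauto. Qed.

Lemma move_along_edge (adj : nat -> nat -> Prop) (x u : nat) :
  adj x u -> x <> u -> forall (t : nat) (c : nat -> nat), (2 * t <= c x)%nat ->
  exists c', reachable adj c c' /\ (c u + t <= c' u)%nat /\
    (forall y, y <> x -> y <> u -> c' y = c y).
Proof.
  intros Hxu Hne t; induction t as [|t IH]; intros c Hc.
  - exists c; split; [constructor | split; [lia | auto]].
  - set (c1 := upd (upd c x (c x - 2)) u (upd c x (c x - 2) u + 1)).
    assert (Hc1u : c1 u = (c u + 1)%nat) by (unfold c1; rewrite upd_eq, upd_neq; auto).
    assert (Hc1x : c1 x = (c x - 2)%nat) by (unfold c1; rewrite upd_neq, upd_eq; auto).
    assert (Hc1y : forall y, y <> x -> y <> u -> c1 y = c y)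
      by (intros y Hx Hu; unfold c1; rewrite !upd_neq; auto).
    destruct (IH c1) as [c' [Hreach [Hc'u Hothers]]]; [lia|].
    exists c'; split; [|split].
    + eapply reach_step; [|exact Hreach]. exists x, u; repeat split; auto; lia.
    + lia.
    + intros y Hx Hu; rewrite Hothers, Hc1y; auto.
Qed.

Lemma push_along_walk (n : nat) (adj : nat -> nat -> Prop) :
  simple_graph n adj -> forall u y l, walk adj u y l ->
  forall (t : nat) (c : nat -> nat), (t * 2 ^ l <= c y)%nat ->
  exists c', reachable adj c c' /\ (t <= c' u)%nat.
Proof.
  intros [_ [Hsym Hirr]] u y l W; induction W as [u|u x y l Hux W IH]; intros t c Hc.
  - exists c; split; [constructor|]. simpl in Hc; lia.
  - destruct (IH (2 * t)%nat c) as [c1 [R1 H1]].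
    { rewrite Nat.pow_succ_r' in Hc; lia. }
    assert (Hxu : x <> u) by (intros ->; exact (Hirr _ Hux)).
    destruct (move_along_edge adj x u (Hsym _ _ Hux) Hxu t c1 H1) as [c2 [R2 [H2 _]]].
    exists c2; split; [eapply reachable_trans; eauto | lia].
Qed.

Fixpoint nsum (f : nat -> nat) (m : nat) : nat :=
  match m with O => O | S m' => (nsum f m' + f m')%nat end.

Definition ind (P : Prop) : nat := if excluded_middle_informative P then 1%nat else 0%nat.

Lemma ind_1 (P : Prop) : P -> ind P = 1%nat.
Proof. intro HP; unfold ind; now destruct excluded_middle_informative. Qed.

Lemma ind_0 (P : Prop) : ~ P -> ind P = 0%nat.
Proof. intro HP; unfold ind; now destruct excluded_middle_informative. Qed.

Lemma ind_le_1 (P : Prop) : (ind P <= 1)%nat.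
Proof. unfold ind; destruct excluded_middle_informative; lia. Qed.

Lemma nsum_le (f g : nat -> nat) (m : nat) :
  (forall y, (y < m)%nat -> (f y <= g y)%nat) -> (nsum f m <= nsum g m)%nat.
Proof.
  induction m as [|m IH]; simpl; intros Hfg; [lia|].
  specialize (IH (fun y Hy => Hfg y ltac:(lia))). specialize (Hfg m ltac:(lia)). lia.
Qed.

Lemma nsum_add (f g : nat -> nat) (m : nat) :
  nsum (fun y => f y + g y)%nat m = (nsum f m + nsum g m)%nat.
Proof. induction m; simpl; lia. Qed.

Lemma nsum_mul_l (a : nat) (f : nat -> nat) (m : nat) :
  nsum (fun y => a * f y)%nat m = (a * nsum f m)%nat.
Proof. induction m; simpl; lia. Qed.

Lemma nsum_swap (g : nat -> nat -> nat) (m n : nat) :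
  nsum (fun y => nsum (fun x => g x y) m) n = nsum (fun x => nsum (fun y => g x y) n) m.
Proof.
  induction n as [|n IH]; simpl.
  - induction m; simpl; lia.
  - rewrite IH, <- nsum_add. reflexivity.
Qed.

Lemma nsum_term_le (f : nat -> nat) (m x : nat) : (x < m)%nat -> (f x <= nsum f m)%nat.
Proof.
  induction m as [|m IH]; simpl; intros Hx; [lia|].
  destruct (Nat.eq_dec x m) as [->|Hne]; [lia|]. specialize (IH ltac:(lia)); lia.
Qed.

Lemma nsum_const_1 (m : nat) : nsum (fun _ => 1%nat) m = m.
Proof. induction m; simpl; lia. Qed.

(** * Gathering pebbles at a vertex *)

Definition neighbour_halves (adj : nat -> nat -> Prop) (w : nat) (c : nat -> nat) (m : nat) : nat :=
  nsum (fun u => ind (adj w u) * Nat.div2 (c u))%nat m.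

Lemma gather_neighbour_halves (n : nat) (adj : nat -> nat -> Prop) (w : nat) :
  simple_graph n adj -> forall (m : nat) (c : nat -> nat),
  exists c', reachable adj c c' /\ (c w + neighbour_halves adj w c m <= c' w)%nat /\
    (forall y, (m <= y)%nat -> y <> w -> c' y = c y).
Proof.
  intros [_ [Hsym Hirr]] m; induction m as [|m IH]; intros c.
  - exists c; split; [constructor | split; [unfold neighbour_halves; simpl; lia | auto]].
  - destruct (IH c) as [c1 [R1 [H1 O1]]]. unfold neighbour_halves in *; simpl.
    destruct (classic (adj w m)) as [Hwm|Hwm].
    + rewrite ind_1 by exact Hwm.
      assert (Hmw : m <> w) by (intros ->; exact (Hirr _ Hwm)).
      assert (Hc1m : c1 m = c m) by (apply O1; auto).
      destruct (move_along_edge adj m w (Hsym _ _ Hwm) Hmw (Nat.div2 (c m)) c1)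
        as [c2 [R2 [H2 O2]]].
      { rewrite Hc1m; pose proof (Nat.div2_odd (c m)); lia. }
      exists c2; split; [eapply reachable_trans; eauto | split; [lia|]].
      intros y Hy Hyw; rewrite O2 by lia; apply O1; lia.
    + rewrite ind_0 by exact Hwm.
      exists c1; split; [exact R1 | split; [lia|]]. intros; apply O1; lia.
Qed.

(** * Balls and degrees *)

Definition ball (adj : nat -> nat -> Prop) (v j y : nat) : Prop :=
  exists l, (l <= j)%nat /\ walk adj v y l.

Definition ball_size (n : nat) (adj : nat -> nat -> Prop) (v j : nat) : nat :=
  nsum (fun y => ind (ball adj v j y)) n.

Definition degree (n : nat) (adj : nat -> nat -> Prop) (x : nat) : nat :=
  nsum (fun y => ind (adj x y)) n.

Lemma ball_mono (adj : nat -> nat -> Prop) (v j j' y : nat) :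
  (j <= j')%nat -> ball adj v j y -> ball adj v j' y.
Proof. intros Hj [l [Hl W]]; exists l; split; [lia | exact W]. Qed.

Lemma unpebblable_few_halves (n : nat) (adj : nat -> nat -> Prop) (v w j : nat) (c : nat -> nat) :
  simple_graph n adj -> ball adj v j w -> unpebblable adj c v ->
  (neighbour_halves adj w c n < 2 ^ j)%nat.
Proof.
  intros SG [l [Hl W]] Hunp. apply Nat.nle_gt; intro Hmany. apply Hunp.
  destruct (gather_neighbour_halves n adj w SG n c) as [c1 [R1 [H1 _]]].
  destruct (push_along_walk n adj SG v w l W 1 c1) as [c2 [R2 H2]].
  { assert (2 ^ l <= 2 ^ j)%nat by (apply Nat.pow_le_mono_r; lia). lia. }
  exists c2; split; [eapply reachable_trans; eauto | exact H2].
Qed.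

Lemma walk_last (adj : nat -> nat -> Prop) (l : nat) :
  forall u y, walk adj u y (S l) -> exists x, walk adj u x l /\ adj x y.
Proof.
  induction l as [|l IH]; intros u y W; inversion W as [|? x ? ? Hux Wxy]; subst.
  - inversion Wxy; subst. exists u; split; [constructor | exact Hux].
  - destruct (IH _ _ Wxy) as [z [Wz Hzy]]. exists z; split; [eapply walk_cons; eauto | exact Hzy].
Qed.

Lemma ball_size_0 (n : nat) (adj : nat -> nat -> Prop) (v : nat) : (ball_size n adj v 0 <= 1)%nat.
Proof.
  assert (Hcenter : forall y, ball adj v 0 y -> y = v).
  { intros y [l [Hl W]]. replace l with 0%nat in W by lia. now inversion W. }
  assert (Hsmall : forall m, (nsum (fun y => ind (ball adj v 0 y)) m <= 1)%nat /\
                             ((m <= v)%nat -> nsum (fun y => ind (ball adj v 0 y)) m = 0%nat)).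
  { induction m as [|m [IH1 IH2]]; simpl; [lia|].
    destruct (classic (ball adj v 0 m)) as [Hb|Hb].
    - apply Hcenter in Hb as ->. rewrite IH2 by lia. pose proof (ind_le_1 (ball adj v 0 v)). lia.
    - rewrite ind_0 by exact Hb. split; [lia|]. intros; rewrite IH2; lia. }
  apply Hsmall.
Qed.

Lemma ball_growth (n : nat) (adj : nat -> nat -> Prop) (v j k : nat) :
  simple_graph n adj -> (1 <= k)%nat ->
  (forall x, ball adj v j x -> (degree n adj x < k)%nat) ->
  (ball_size n adj v (S j) <= k * ball_size n adj v j)%nat.
Proof.
  intros [Hbound _] Hk Hdeg. unfold ball_size.
  set (b := fun x => ind (ball adj v j x)).
  (* each vertex of the larger ball is in the smaller one or adjacent to it *)
  assert (Hcover : forall y, (y < n)%nat -> (ind (ball adj v (S j) y) <=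
            b y + nsum (fun x => b x * ind (adj x y)) n)%nat).
  { intros y Hy. destruct (classic (ball adj v (S j) y)) as [[l [Hl W]]|Hnb].
    2: { rewrite ind_0 by exact Hnb. lia. }
    rewrite ind_1 by (exists l; auto).
    destruct (Nat.eq_dec l (S j)) as [->|Hne].
    - destruct (walk_last _ _ _ _ W) as [x [Wx Hxy]].
      pose proof (nsum_term_le (fun x => b x * ind (adj x y))%nat n x
                    (proj1 (Hbound _ _ Hxy))) as Hterm.
      assert (Hbx : b x = 1%nat) by (apply ind_1; exists j; auto).
      simpl in Hterm; rewrite Hbx, (ind_1 (adj x y)) in Hterm by exact Hxy. lia.
    - unfold b; rewrite ind_1 by (exists l; split; auto; lia). lia. }
  assert (Hedges : (nsum (fun x => nsum (fun y => b x * ind (adj x y)) n) n <=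
                    nsum (fun x => (k - 1) * b x) n)%nat).
  { apply nsum_le; intros x Hx. rewrite nsum_mul_l. unfold b.
    destruct (classic (ball adj v j x)) as [Hbx|Hbx].
    - rewrite ind_1 by exact Hbx. specialize (Hdeg x Hbx). unfold degree in Hdeg. lia.
    - rewrite ind_0 by exact Hbx. lia. }
  apply nsum_le in Hcover. rewrite nsum_add, nsum_swap in Hcover.
  rewrite nsum_mul_l in Hedges. fold b. nia.
Qed.

Lemma hub_exists (n : nat) (adj : nat -> nat -> Prop) (v d k : nat) :
  simple_graph n adj -> within_dist n adj v d -> (1 <= d)%nat -> (1 <= k)%nat ->
  (k ^ d < n)%nat -> exists w, ball adj v (d - 1) w /\ (k <= degree n adj w)%nat.
Proof.
  intros SG Hwithin Hd Hk Hn. apply NNPP; intro Hnohub.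
  assert (Hdeg : forall x, ball adj v (d - 1) x -> (degree n adj x < k)%nat).
  { intros x Hx. apply Nat.nle_gt. intro; apply Hnohub; eauto. }
  assert (Hsize : forall j, (j <= d)%nat -> (ball_size n adj v j <= k ^ j)%nat).
  { induction j as [|j IH]; intros Hj; [apply ball_size_0|].
    pose proof (ball_growth n adj v j k SG Hk
                  (fun x Hx => Hdeg x (ball_mono adj v j (d - 1) x ltac:(lia) Hx))).
    specialize (IH ltac:(lia)). simpl. nia. }
  assert (Hfull : (n <= ball_size n adj v d)%nat).
  { rewrite <- (nsum_const_1 n) at 1. apply nsum_le; intros y Hy.
    rewrite ind_1 by exact (Hwithin y Hy). lia. }
  specialize (Hsize d (le_n d)). lia.
Qed.

Fixpoint prodR (m : nat) (f : nat -> R) : R :=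
  match m with O => 1 | S m' => prodR m' f * f m' end.

Lemma prodR_ext (m : nat) (f g : nat -> R) :
  (forall u, (u < m)%nat -> f u = g u) -> prodR m f = prodR m g.
Proof.
  induction m as [|m IH]; simpl; intros Hfg; auto.
  rewrite IH, Hfg by (try intros; try apply Hfg; lia). reflexivity.
Qed.

Lemma prodR_mul (m : nat) (f g : nat -> R) : prodR m f * prodR m g = prodR m (fun u => f u * g u).
Proof. induction m as [|m IH]; simpl; [ring|]. rewrite <- IH; ring. Qed.

Lemma prodR_le (m : nat) (f g : nat -> R) :
  (forall u, (u < m)%nat -> 0 <= f u <= g u) -> 0 <= prodR m f <= prodR m g.
Proof.
  induction m as [|m IH]; simpl; intros Hfg; [lra|].
  destruct (IH (fun u Hu => Hfg u ltac:(lia))) as [H0 H1].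
  destruct (Hfg m ltac:(lia)). split; [nra | apply Rmult_le_compat; lra].
Qed.

Lemma pow_nsum (z : R) (e : nat -> nat) (m : nat) : z ^ nsum e m = prodR m (fun u => z ^ e u).
Proof. induction m as [|m IH]; simpl; auto. now rewrite pow_add, IH. Qed.

Lemma geom_weight_prodR (p : R) (m : nat) (c : nat -> nat) :
  geom_weight p m c = prodR m (fun u => p * (1 - p) ^ c u).
Proof. induction m as [|m IH]; simpl; congruence. Qed.

Lemma sum_configs_ext (m N : nat) : forall f g : (nat -> nat) -> R,
  (forall c, f c = g c) -> sum_configs m N f = sum_configs m N g.
Proof. induction m as [|m IH]; intros f g H; simpl; auto. apply sum_eq; intros; apply IH; auto. Qed.

Lemma sum_configs_le (m N : nat) : forall f g : (nat -> nat) -> R,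
  (forall c, f c <= g c) -> sum_configs m N f <= sum_configs m N g.
Proof. induction m as [|m IH]; intros f g H; simpl; auto. apply sum_Rle; intros; apply IH; auto. Qed.

Lemma sum_configs_scal (m N : nat) : forall (f : (nat -> nat) -> R) (a : R),
  sum_configs m N (fun c => f c * a) = sum_configs m N f * a.
Proof.
  induction m as [|m IH]; intros f a; simpl; auto.
  rewrite Rmult_comm, scal_sum. apply sum_eq; intros. apply IH.
Qed.

Lemma sum_configs_prodR (m N : nat) (F : nat -> nat -> R) :
  sum_configs m N (fun c => prodR m (fun u => F u (c u))) = prodR m (fun u => sum_f_R0 (F u) N).
Proof.
  induction m as [|m IH]; simpl; auto.
  rewrite scal_sum, <- IH. apply sum_eq; intros j _.
  rewrite (Rmult_comm (F m j)), <- sum_configs_scal.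
  apply sum_configs_ext; intros c.
  rewrite (prodR_ext m _ (fun u => F u (c u))) by (intros; rewrite upd_neq; auto; lia).
  now rewrite upd_eq.
Qed.

(** * The generating function of half a geometric variable *)

(** Upper bound for [E z^(floor(X/2))] when [X] is geometric with
    [P(X = j) = (1-r) r^j]. *)
Definition half_geom_mgf (r z : R) : R := (1 - r ^ 2) / (1 - r ^ 2 * z).

Lemma sum_f_R0_mono (h : nat -> R) (N K : nat) :
  (forall j, 0 <= h j) -> sum_f_R0 h N <= sum_f_R0 h (N + K).
Proof.
  intros Hh; induction K as [|K IH]; [rewrite Nat.add_0_r; lra|].
  replace (N + S K)%nat with (S (N + K)) by lia. simpl. specialize (Hh (S (N + K))). lra.
Qed.

Lemma half_geom_sum_le (r z : R) (N : nat) : 0 < r < 1 -> 0 <= z <= 1 ->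
  sum_f_R0 (fun j => (1 - r) * r ^ j * z ^ Nat.div2 j) N <= half_geom_mgf r z.
Proof.
  intros Hr Hz. set (h := fun j => (1 - r) * r ^ j * z ^ Nat.div2 j).
  set (w := r ^ 2 * z). set (A := half_geom_mgf r z).
  assert (Hr2 : 0 < r ^ 2 < 1) by (simpl; nra).
  assert (Hw : 0 <= w < 1) by (unfold w; split; nra).
  assert (HA : A * (1 - w) = 1 - r ^ 2) by (unfold A, half_geom_mgf; fold w; field; lra).
  assert (Hh : forall j, 0 <= h j)
    by (intro j; unfold h; repeat apply Rmult_le_pos; try apply pow_le; lra).
  (* the partial sums over complete pairs [2i, 2i+1] are explicit *)
  assert (Hpairs : forall i, sum_f_R0 h (2 * i + 1) = A - A * w ^ S i).
  { induction i as [|i IH].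
    - unfold h; simpl. replace (A - A * (w * 1)) with (A * (1 - w)) by ring. rewrite HA. ring.
    - replace (2 * S i + 1)%nat with (S (S (2 * i + 1))) by lia.
      change (sum_f_R0 h (S (S (2 * i + 1))))
        with (sum_f_R0 h (2 * i + 1) + h (S (2 * i + 1)) + h (S (S (2 * i + 1)))).
      assert (Heven : h (S (2 * i + 1)) = (1 - r) * w ^ S i).
      { unfold h, w. replace (S (2 * i + 1)) with (2 * S i)%nat by lia.
        rewrite Nat.div2_double, pow_mult, Rpow_mult_distr. ring. }
      assert (Hodd : h (S (S (2 * i + 1))) = (1 - r) * r * w ^ S i).
      { unfold h, w. replace (S (S (2 * i + 1))) with (S (2 * S i)) by lia.
        rewrite Nat.div2_succ_double, Rpow_mult_distr, <- tech_pow_Rmult, pow_mult. ring. }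
      rewrite IH, Heven, Hodd.
      replace (A - A * w ^ S i + (1 - r) * w ^ S i + (1 - r) * r * w ^ S i)
        with (A - A * w ^ S i + (1 - r ^ 2) * w ^ S i) by ring.
      rewrite <- HA. simpl. ring. }
  apply Rle_trans with (sum_f_R0 h (2 * N + 1)).
  - replace (2 * N + 1)%nat with (N + (N + 1))%nat by lia. apply sum_f_R0_mono; auto.
  - rewrite Hpairs.
    assert (0 <= A) by (rewrite <- (Rmult_1_r A); nra).
    assert (0 <= w ^ S N) by (apply pow_le; lra). nra.
Qed.

(** * A Chernoff bound for the neighbour half-sum *)

Lemma pow_le_pow_base_le_1 (z : R) (a b : nat) : 0 <= z <= 1 -> (a <= b)%nat -> z ^ b <= z ^ a.
Proof.
  intros Hz Hab. replace b with (a + (b - a))%nat by lia. rewrite pow_add.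
  assert (0 <= z ^ a) by (apply pow_le; lra).
  assert (z ^ (b - a) <= 1) by (rewrite <- (pow1 (b - a)); apply pow_incr; lra).
  assert (0 <= z ^ (b - a)) by (apply pow_le; lra). nra.
Qed.

Lemma indic_le_pow_ratio (P : Prop) (s m : nat) (z : R) :
  0 < z <= 1 -> (P -> (s <= m)%nat) -> indic P <= z ^ s / z ^ m.
Proof.
  intros Hz HP. assert (Hzm : 0 < z ^ m) by (apply pow_lt; lra).
  unfold indic. destruct excluded_middle_informative as [HPtrue|HPfalse].
  - assert (z ^ m <= z ^ s) by (apply pow_le_pow_base_le_1; [lra | exact (HP HPtrue)]).
    apply Rmult_le_reg_r with (z ^ m); [exact Hzm|].
    unfold Rdiv; rewrite Rmult_assoc, Rinv_l by lra. lra.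
  - apply Rmult_le_pos; [apply pow_le; lra | left; apply Rinv_0_lt_compat, Hzm].
Qed.

Lemma vertex_factor_le (p z : R) (e N : nat) : 0 < p < 1 -> 0 < z <= 1 -> (e <= 1)%nat ->
  0 <= sum_f_R0 (fun j => p * (1 - p) ^ j * (z ^ e) ^ Nat.div2 j) N
    <= half_geom_mgf (1 - p) z ^ e.
Proof.
  intros Hp Hz He. assert (Hze : 0 <= z ^ e <= 1) by (destruct e as [|[|]]; simpl; [lra | lra | lia]).
  split.
  - apply cond_pos_sum; intro j. repeat apply Rmult_le_pos; try apply pow_le; lra.
  - replace (half_geom_mgf (1 - p) z ^ e) with (half_geom_mgf (1 - p) (z ^ e)).
    + eapply Rle_trans; [|apply (half_geom_sum_le (1 - p) (z ^ e) N); lra].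
      right; apply sum_eq; intros j _. now replace (1 - (1 - p)) with p by ring.
    + destruct e as [|[|]]; [| now rewrite !pow_1 | lia].
      unfold half_geom_mgf; simpl. field. nra.
Qed.

(** Exponential Markov inequality: for [0 < z <= 1], the probability that
    the neighbour half-sum at [w] is at most [m] is bounded by
    [E z^(half-sum) / z^m], and the expectation factorises over the
    vertices, each neighbour of [w] contributing a factor [half_geom_mgf]. *)
Lemma prob_few_halves (n : nat) (adj : nat -> nat -> Prop) (w m N : nat) (p z : R)
  (E : (nat -> nat) -> Prop) :
  0 < p < 1 -> 0 < z <= 1 ->
  (forall c, E c -> (neighbour_halves adj w c n <= m)%nat) ->
  prob_trunc n p E N <= half_geom_mgf (1 - p) z ^ degree n adj w / z ^ m.
Proof.
  intros Hp Hz HE.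
  set (F := fun u j => p * (1 - p) ^ j * (z ^ ind (adj w u)) ^ Nat.div2 j).
  assert (Hzm : 0 < z ^ m) by (apply pow_lt; lra).
  assert (Hmarkov : forall c, geom_weight p n c * indic (E c) <=
                              prodR n (fun u => F u (c u)) * / z ^ m).
  { intros c.
    assert (Hfactor : prodR n (fun u => F u (c u)) =
                      geom_weight p n c * z ^ neighbour_halves adj w c n).
    { unfold F, neighbour_halves. rewrite geom_weight_prodR, pow_nsum, prodR_mul.
      apply prodR_ext; intros u _. now rewrite <- pow_mult. }
    assert (Hg : 0 <= geom_weight p n c).
    { rewrite geom_weight_prodR. apply prodR_le with (g := fun u => p * (1 - p) ^ c u).
      intros; split; [apply Rmult_le_pos; [lra | apply pow_le; lra] | lra]. }
    rewrite Hfactor, Rmult_assoc. apply Rmult_le_compat_l; [exact Hg|].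
    apply indic_le_pow_ratio; [exact Hz | apply HE]. }
  unfold prob_trunc. eapply Rle_trans; [apply sum_configs_le, Hmarkov|].
  rewrite sum_configs_scal, sum_configs_prodR. unfold Rdiv.
  apply Rmult_le_compat_r; [left; apply Rinv_0_lt_compat, Hzm|].
  unfold degree; rewrite pow_nsum. apply prodR_le; intros u _.
  apply vertex_factor_le; [exact Hp | exact Hz | apply ind_le_1].
Qed.

Lemma exp_pow (x : R) (m : nat) : exp x ^ m = exp (INR m * x).
Proof. rewrite <- Rpower_pow by apply exp_pos. unfold Rpower. now rewrite ln_exp. Qed.

(** With [z = m / (m + k)], a bound [A <= q (m + k) / k] on the one-neighbour
    factor gives [A^k / z^m <= (e q (m + k) / k)^k]; the factor [e^k] comes
    from [(1 + k/m)^m <= e^k]. *)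
Lemma chernoff_choice (m k : nat) (q A : R) : (1 <= m)%nat -> (1 <= k)%nat ->
  0 <= A <= q * (INR m + INR k) / INR k ->
  A ^ k / (INR m / (INR m + INR k)) ^ m <= (exp 1 * (q * (INR m + INR k) / INR k)) ^ k.
Proof.
  intros Hm Hk HA.
  assert (Hm' : 1 <= INR m) by (apply (le_INR 1); exact Hm).
  assert (Hk' : 1 <= INR k) by (apply (le_INR 1); exact Hk).
  assert (Hinv : / (INR m / (INR m + INR k)) ^ m <= exp 1 ^ k).
  { rewrite <- pow_inv. replace (/ (INR m / (INR m + INR k))) with (1 + INR k / INR m)
      by (field; lra).
    apply Rle_trans with (exp (INR k / INR m) ^ m).
    - apply pow_incr. pose proof (exp_ineq1_le (INR k / INR m)).
      assert (0 <= INR k / INR m) by (apply Rmult_le_pos; [lra | left; apply Rinv_0_lt_compat; lra]).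
      lra.
    - rewrite !exp_pow. right; f_equal; field; lra. }
  unfold Rdiv at 1. rewrite Rpow_mult_distr, Rmult_comm.
  apply Rmult_le_compat.
  - rewrite <- pow_inv. apply pow_le. left; apply Rinv_0_lt_compat, Rdiv_lt_0_compat; lra.
  - apply pow_le; lra.
  - exact Hinv.
  - apply pow_incr; exact HA.
Qed.

Lemma prob_few_halves_optimised (n : nat) (adj : nat -> nat -> Prop) (w m k N : nat) (p : R)
  (E : (nat -> nat) -> Prop) :
  0 < p < 1 -> (1 <= m)%nat -> (1 <= k)%nat -> (k <= degree n adj w)%nat ->
  (forall c, E c -> (neighbour_halves adj w c n <= m)%nat) ->
  prob_trunc n p E N <= (exp 1 * ((1 - (1 - p) ^ 2) * (INR m + INR k) / INR k)) ^ k.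
Proof.
  intros Hp Hm Hk Hdeg HE.
  assert (Hm' : 1 <= INR m) by (apply (le_INR 1); exact Hm).
  assert (Hk' : 1 <= INR k) by (apply (le_INR 1); exact Hk).
  set (z := INR m / (INR m + INR k)).
  assert (Hz : 0 < z < 1).
  { unfold z; split; [apply Rdiv_lt_0_compat; lra|].
    apply Rmult_lt_reg_r with (INR m + INR k); [lra|].
    unfold Rdiv; rewrite Rmult_assoc, Rinv_l by lra. lra. }
  set (r := 1 - p). set (A := half_geom_mgf r z).
  assert (Hr2 : 0 < r ^ 2 < 1) by (unfold r; simpl; nra).
  assert (HA : 0 <= A <= 1).
  { unfold A, half_geom_mgf. split.
    - apply Rmult_le_pos; [lra | left; apply Rinv_0_lt_compat; nra].
    - apply Rmult_le_reg_r with (1 - r ^ 2 * z); [nra|].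
      unfold Rdiv; rewrite Rmult_assoc, Rinv_l by nra. nra. }
  assert (HAq : A <= (1 - r ^ 2) * (INR m + INR k) / INR k).
  { replace ((1 - r ^ 2) * (INR m + INR k) / INR k) with ((1 - r ^ 2) / (1 - z))
      by (unfold z; field; lra).
    unfold A, half_geom_mgf, Rdiv. apply Rmult_le_compat_l; [lra|].
    apply Rinv_le_contravar; nra. }
  eapply Rle_trans; [apply (prob_few_halves n adj w m N p z E Hp ltac:(lra) HE)|].
  eapply Rle_trans; [|apply (chernoff_choice m k (1 - r ^ 2) A Hm Hk (conj (proj1 HA) HAq))].
  apply Rmult_le_compat_r; [left; apply Rinv_0_lt_compat, pow_lt, Hz|].
  apply pow_le_pow_base_le_1; [exact HA | exact Hdeg].
Qed.

Lemma pow_lt_pow_base (a b : R) (e : nat) : 0 <= a < b -> (1 <= e)%nat -> a ^ e < b ^ e.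
Proof.
  intros Hab He. destruct e as [|e]; [lia|]. simpl.
  assert (a ^ e <= b ^ e) by (apply pow_incr; lra).
  assert (0 < b ^ e) by (apply pow_lt; lra).
  assert (0 <= a ^ e) by (apply pow_le; lra). nra.
Qed.

Lemma ceil_root_bounds (n d k : nat) : (2 <= n)%nat -> (1 <= d)%nat ->
  INR k - 1 < Rpower (INR n) (/ INR d) - 1 <= INR k -> (1 <= k)%nat /\ (k ^ d < n)%nat.
Proof.
  intros Hn Hd [Hk1 Hk2].
  set (x := Rpower (INR n) (/ INR d)) in *.
  assert (Hn' : 2 <= INR n) by (apply (le_INR 2); exact Hn).
  assert (Hd' : 1 <= INR d) by (apply (le_INR 1); exact Hd).
  assert (Hx0 : 0 < x) by apply exp_pos.
  assert (Hxd : x ^ d = INR n).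
  { unfold x. rewrite <- Rpower_pow, Rpower_mult by apply exp_pos.
    replace (/ INR d * INR d) with 1 by (field; lra). apply Rpower_1; lra. }
  assert (Hk : (1 <= k)%nat).
  { destruct k as [|k]; [|lia]. exfalso. simpl in Hk2.
    assert (x ^ d <= 1 ^ d) by (apply pow_incr; lra). rewrite pow1 in *. lra. }
  split; [exact Hk|]. apply INR_lt. rewrite pow_INR, <- Hxd.
  apply pow_lt_pow_base; [split; [apply pos_INR | lra] | exact Hd].
Qed.

Lemma chernoff_constant_closed_form (alpha M K : R) : 0 < alpha -> 0 < K ->
  exp 1 * ((1 - (1 - / (1 + alpha)) ^ 2) * (M - 1 + K) / K)
  = exp 1 * (M + K - 1) / (K * (1 + Phi alpha)).
Proof.
  intros Ha HK. unfold Phi. field.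
  assert (0 <= alpha ^ 2) by (apply pow_le; lra). repeat split; lra.
Qed.

Theorem lemma24 (n : nat) (adj : nat -> nat -> Prop) (v d : nat) (alpha : R) (k : nat) :
  (2 <= n)%nat ->
  simple_graph n adj ->
  connected n adj ->
  (v < n)%nat ->
  (2 <= d)%nat ->
  within_dist n adj v d ->
  0 < alpha ->
  (* k = ceil(n^(1/d) - 1) *)
  INR k - 1 < Rpower (INR n) (/ INR d) - 1 <= INR k ->
  forall N : nat,
    prob_trunc n (/ (1 + alpha)) (fun c => unpebblable adj c v) N
    <= (exp 1 * (2 ^ (d - 1) + INR k - 1) / (INR k * (1 + Phi alpha))) ^ k.
Proof.
  intros Hn SG _ _ Hd Hwithin Ha Hceil N.
  destruct (ceil_root_bounds n d k Hn ltac:(lia) Hceil) as [Hk Hkd].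
  destruct (hub_exists n adj v d k SG Hwithin ltac:(lia) Hk Hkd) as [w [Hw Hdeg]].
  set (m := (2 ^ (d - 1) - 1)%nat).
  assert (Hpow : (2 <= 2 ^ (d - 1))%nat)
    by (replace 2%nat with (2 ^ 1)%nat at 1 by reflexivity; apply Nat.pow_le_mono_r; lia).
  assert (Hm : INR m = 2 ^ (d - 1) - 1) by (unfold m; rewrite minus_INR, pow_INR by lia; reflexivity).
  assert (Hp : 0 < / (1 + alpha) < 1).
  { split; [apply Rinv_0_lt_compat; lra|]. rewrite <- Rinv_1. apply Rinv_lt_contravar; lra. }
  assert (Hk' : 0 < INR k) by (apply lt_0_INR; lia).
  rewrite <- (chernoff_constant_closed_form alpha (2 ^ (d - 1)) (INR k) Ha Hk'), <- Hm.
  apply (prob_few_halves_optimised n adj w m k N); [exact Hp | lia | exact Hk | exact Hdeg|].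
  (* if [v] is unpebblable, the hub gathers fewer than [2^(d-1)] pebbles *)
  intros c Hunp. pose proof (unpebblable_few_halves n adj v w (d - 1) c SG Hw Hunp). lia.
Qed.
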